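(* Let $p$ be a probability density on $\mathbb{R}^{d}$, let $z_1, z_2, \dots$ be i.i.d. samples from $p$, let $K$ be a probability density on $\mathbb{R}^{d}$ with $\mathbb{E}_{\xi\sim K}[\xi]=0$ and $\mathbb{E}_{\xi\sim K}[\xi\xi^\top]=I$, and let $(h_n)_{n\ge1}$ be a sequence of positive bandwidths. Let $\Theta$ be a parameter set and $\hat f_\theta:\mathbb{R}^{d}\to(0,\infty)$, $\theta\in\Theta$, a family of positive functions, with $(z,\theta)\mapsto \hat f_\theta(z)$ continuous. Define $$\hat q_n^{(h_n)}(z)=\frac{1}{n}\sum_{i=1}^n \frac{1}{h_n^{d}}K\!\left(\frac{z-z_i}{h_n}\right),\quad l(\theta)=-\int \log\hat f_\theta(z)\,p(z)\,dz,\quad l_n^{(h_n)}(\theta)=-\int \log\hat f_\theta(z)\,\hat q_n^{(h_n)}(z)\,dz.$$ Suppose that for some $\epsilon>0$ there is a constant $B_p^{(\epsilon)}$ with $$\int |\log \hat f_\theta(z)|^{1+\epsilon}\,p(z)\,dz\le B_p^{(\epsilon)}<\infty\quad\text{for all }\theta\in\Theta,$$ and that there is an $n_0$ such that for all $n>n_0$ there is a constant $B_{\hat q}^{(\epsilon)}$ with $$\int |\log \hat f_\theta(z)|^{1+\epsilon}\,\hat q_n^{(h_n)}(z)\,dz\le B_{\hat q}^{(\epsilon)}<\infty\quad\text{for all }\theta\in\Theta,$$ almost surely. Then there is a constant $C_\epsilon$ such that, with probability $1$, for all $n>n_0$, $$\sup_{\theta\in\Theta}\left|l_n^{(h_n)}(\theta)-l(\theta)\right|\le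 C_\epsilon\left(\int\left|\hat q_n^{(h_n)}(z)-p(z)\right|dz\right)^{\frac{\epsilon}{1+\epsilon}}.$$
   Context: This is the setting of maximum likelihood estimation with additive data noise (noise regularization). The data points $z_i\in\mathbb{R}^{d}$, sampled i.i.d. from the unknown true density $p$, are perturbed by independent noise vectors drawn from $K$ and scaled by the bandwidth $h_n$. Drawing a data point uniformly at random and adding $h_n\xi$ with $\xi\sim K$ is the same as sampling from the kernel density estimate $\hat q_n^{(h_n)}$. The quantity $l(\theta)$ is the idealized negative expected log-likelihood under $p$. The quantity $l_n^{(h_n)}(\theta)$ is the negative expected log-likelihood under the kernel density estimate; it is a random quantity because it depends on $z_1,\dots,z_n$. *)

From HB Require Import structures.
From mathcomp Require Import all_boot all_order all_algebra.
From mathcomp Require Import all_classical all_reals all_analysis.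
Set Implicit Arguments. Unset Strict Implicit. Unset Printing Implicit Defensive.
Import Order.TTheory GRing.Theory Num.Theory.
Import numFieldNormedType.Exports.
Local Open Scope classical_set_scope.
Local Open Scope ring_scope.

(* R^d is represented by d.-tuple R, equipped with its product (Borel)
   sigma-algebra from measurable_structure.v. *)

(* Lebesgue measure on R^d, characterized by its value on closed boxes
   (boxes form a pi-system generating the sigma-algebra, so this determines
   the measure uniquely). *)
Definition is_lebesgue_measure (R : realType) (d : nat)
  (leb : set (d.-tuple R) -> \bar R) : Prop :=
  forall a b : d.-tuple R, (forall i, tnth a i <= tnth b i) ->
    leb [set x | forall i, tnth a i <= tnth x i <= tnth b i]
    = (\prod_(i < d) (tnth b i - tnth a i))%:E.

Definition is_density (R : realType) (d : nat)
  (leb : {measure set (d.-tuple R) -> \bar R}) (f : d.-tuple R -> R) : Prop :=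
  measurable_fun [set: d.-tuple R] f /\ (forall x, 0 <= f x) /\
  (\int[leb]_x (f x)%:E = 1)%E.

(* Euclidean topology on tuples, transported from row vectors *)
Definition tuple_of_row (R : realType) (d : nat) (v : 'rV[R]_d) : d.-tuple R :=
  [tuple v ord0 i | i < d].

Definition tshift_scale (R : realType) (d : nat) (z zi : d.-tuple R) (h : R)
  : d.-tuple R := [tuple (tnth z i - tnth zi i) / h | i < d].

(* kernel density estimate  q_n^(h_n)(z) built from Z 0, ..., Z (n-1) *)
Definition kde (R : realType) (d : nat) (Omega : Type)
  (K : d.-tuple R -> R) (Z : nat -> Omega -> d.-tuple R) (h : nat -> R)
  (n : nat) (w : Omega) (z : d.-tuple R) : R :=
  (n%:R)^-1 * \sum_(i < n) ((h n ^+ d)^-1 * K (tshift_scale z (Z i w) (h n))).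

Definition mutually_independent (R : realType) (dO : measure_display)
  (Omega : measurableType dO) (P : probability Omega R) (d : nat)
  (Z : nat -> Omega -> d.-tuple R) : Prop :=
  forall (s : seq nat) (A : nat -> set (d.-tuple R)), uniq s ->
    (forall i, measurable (A i)) ->
    P (\bigcap_(i in [set j | j \in s]) (Z i @^-1` A i))
    = (\prod_(i <- s) fine (P (Z i @^-1` A i)))%:E.

Definition neg_loglik (R : realType) (d : nat)
  (leb : {measure set (d.-tuple R) -> \bar R})
  (f : d.-tuple R -> R) (q : d.-tuple R -> R) : \bar R :=
  (- \int[leb]_z (ln (f z) * q z)%:E)%E.

(* Write a = ln f_th and dist = |q - p| with q the kernel density estimate.
   Pointwise |a| <= M + |a|^(1+e) / M^e for every M > 0, and
   \int |a|^(1+e) dist <= \int |a|^(1+e) (q + p) <= Bq + Bp, hence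
   \int |a| dist <= M \int dist + (Bq + Bp) / M^e.  Taking
   M = (\int dist)^(-1/(1+e)) balances the two terms and gives the bound with
   C = 1 + Bq + Bp, for every th and every sample path of the almost-sure event
   of the hypothesis on q.  Measurability
   of ln f_th comes from continuity, since on tuples every open set of row
   vectors pulls back to a countable union of rational boxes. *)

From HB Require Import structures.
From mathcomp Require Import all_boot all_order all_algebra.
From mathcomp Require Import all_classical all_reals all_analysis measurable_realfun.
From mathcomp Require Import ring lra.
Import Order.TTheory GRing.Theory Num.Theory.
Import numFieldNormedType.Exports.
Local Open Scope classical_set_scope.
Local Open Scope ring_scope.

Section powR_bounds.
Context {R : realType}.
Implicit Types y M e B D X : R.

(* Split at y = M: below, y <= M; above, y = y^(1+e) / y^e <= y^(1+e) / M^e. *)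
Lemma ler_cutoff_powR y M e : 0 <= y -> 0 < M -> 0 < e ->
  y <= M + y `^ (1 + e) / M `^ e.
Proof.
move=> y0 M0 e0; have [yM|My] := leP y M.
  by rewrite (le_trans yM) // lerDl divr_ge0 // powR_ge0.
have y_neq0 : y != 0 by rewrite gt_eqF // (lt_trans M0 My).
rewrite powRD ?y_neq0 ?implybT // powRr1 // -mulrA; apply: ler_wpDl; first exact: ltW.
rewrite ler_peMr // ler_pdivlMr ?powR_gt0 // mul1r.
by apply: ge0_ler_powR; rewrite ?nnegrE ?ltW // (lt_trans M0 My).
Qed.

Lemma ler_balance_powR X D B e : 0 <= D -> 0 <= B -> 0 < e ->
  (forall M, 0 < M -> X <= M * D + B / M `^ e) ->
  X <= (1 + B) * D `^ (e / (1 + e)).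
Proof.
move=> D0 B0 e0 XM; have e1 : 0 < 1 + e by rewrite addr_gt0.
have [D_eq0|D_neq0] := eqVneq D 0.
  rewrite D_eq0 in XM *; rewrite powR0 ?mulr0 ?mulf_neq0 ?gt_eqF ?invr_gt0 //.
  rewrite leNgt; apply/negP => X0.
  have B1 : 0 < B + 1 by rewrite ltr_wpDl.
  have BX : 0 < (B + 1) / X by rewrite divr_gt0.
  (* with M^e = (B + 1) / X the bound reads X <= B X / (B + 1) < X *)
  have := XM _ (powR_gt0 (e^-1) BX).
  rewrite mulr0 add0r -powRrM mulVf ?gt_eqF // powRr1; last exact: ltW.
  by rewrite invf_div mulrA ler_pdivlMr //; nra.
have Dp : 0 < D by rewrite lt0r D_neq0.
(* the two terms balance at M = D^(-1/(1+e)) *)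
pose M := D `^ (- (1 + e)^-1).
have MD : M * D = D `^ (e / (1 + e)).
  rewrite /M -{2}(powRr1 D0) -powRD ?D_neq0 ?implybT //.
  by congr (D `^ _); field; rewrite gt_eqF.
have Me : M `^ e = (D `^ (e / (1 + e)))^-1.
  by rewrite /M -powRrM -powRN mulNr mulrC.
by apply: le_trans (XM M (powR_gt0 _ Dp)) _; rewrite MD Me invrK mulrDl mul1r.
Qed.

End powR_bounds.

Section integral_density_perturbation.
Context dT (T : measurableType dT) (R : realType) (mu : {measure set T -> \bar R}).

Lemma le_ge0_integrable (f g : T -> R) :
  measurable_fun setT f -> measurable_fun setT g -> (forall x, `|f x| <= g x) ->
  (\int[mu]_x (g x)%:E < +oo)%E -> mu.-integrable setT (EFin \o f).
Proof.
move=> mf mg fg gfin; have g0 x : 0 <= g x := le_trans (normr_ge0 _) (fg x).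
apply: (@le_integrable _ _ _ _ _ _ _ (EFin \o g)) => //.
- exact/measurable_EFinP.
- by move=> x _; rewrite !abse_EFin lee_fin (ger0_norm (g0 x)).
apply/integrableP; split; first exact/measurable_EFinP.
by under eq_integral => x _ do rewrite abse_EFin (ger0_norm (g0 x)).
Qed.

Variables (a p q : T -> R) (e Bp Bq : R).
Hypotheses (ma : measurable_fun setT a) (mp : measurable_fun setT p)
  (mq : measurable_fun setT q) (p0 : forall x, 0 <= p x) (q0 : forall x, 0 <= q x)
  (e0 : 0 < e) (p_fin : (\int[mu]_x (p x)%:E < +oo)%E)
  (HBp : (\int[mu]_x ((`|a x| `^ (1 + e)) * p x)%:E <= Bp%:E)%E)
  (HBq : (\int[mu]_x ((`|a x| `^ (1 + e)) * q x)%:E <= Bq%:E)%E).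

Let mabs : measurable_fun setT (fun x => `|a x|).
Proof. by apply: measurableT_comp => //; exact: normr_measurable. Qed.

Let mpow : measurable_fun setT (fun x => `|a x| `^ (1 + e)).
Proof. exact: measurableT_comp (measurable_powR _) mabs. Qed.

Let mdist : measurable_fun setT (fun x => `|q x - p x|).
Proof.
by apply: measurableT_comp; [exact: normr_measurable | exact: measurable_funB].
Qed.

Lemma integral_powR_dist_le :
  (\int[mu]_x ((`|a x| `^ (1 + e)) * `|q x - p x|)%:E <= (Bq + Bp)%:E)%E.
Proof.
have wt_ge0 (r : T -> R) : (forall x, 0 <= r x) ->
    forall x, setT x -> (0 <= (`|a x| `^ (1 + e) * r x)%:E)%E.
  by move=> r0 x _; rewrite lee_fin mulr_ge0 ?powR_ge0.
have mwt (r : T -> R) : measurable_fun setT r ->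
    measurable_fun setT (fun x => (`|a x| `^ (1 + e) * r x)%:E).
  by move=> mr; apply/measurable_EFinP; exact: measurable_funM.
apply: (@le_trans _ _ (\int[mu]_x ((`|a x| `^ (1 + e) * q x)%:E
                                  + (`|a x| `^ (1 + e) * p x)%:E))%E).
  apply: ge0_le_integral => //.
  - exact: mwt mdist.
  - exact: emeasurable_funD (mwt _ mq) (mwt _ mp).
  move=> x _; rewrite -EFinD lee_fin -mulrDr ler_wpM2l ?powR_ge0 //.
  by rewrite (le_trans (ler_normB _ _)) // !ger0_norm.
rewrite ge0_integralD //; last 4 first.
- exact: wt_ge0 _ q0.
- exact: mwt _ mq.
- exact: wt_ge0 _ p0.
- exact: mwt _ mp.
by rewrite EFinD; exact: leeD.
Qed.

Lemma integral_mul_dist_le M : 0 < M ->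
  (\int[mu]_x (`|a x| * `|q x - p x|)%:E
    <= M%:E * \int[mu]_x (`|q x - p x|)%:E + ((Bq + Bp) / M `^ e)%:E)%E.
Proof.
move=> M0; have M0' := ltW M0.
have Me0 : 0 <= (M `^ e)^-1 by rewrite invr_ge0 powR_ge0.
have mscale (c : R) (r : T -> R) : measurable_fun setT r ->
    measurable_fun setT (fun x => c%:E * (r x)%:E)%E.
  by move=> mr; apply: emeasurable_funM => //; exact/measurable_EFinP.
apply: (@le_trans _ _ (\int[mu]_x (M%:E * (`|q x - p x|)%:E
  + (M `^ e)^-1%:E * (`|a x| `^ (1 + e) * `|q x - p x|)%:E))%E).
  apply: ge0_le_integral => //.
  - by apply/measurable_EFinP; exact: measurable_funM.
  - exact: emeasurable_funD (mscale _ _ mdist) (mscale _ _ (measurable_funM mpow mdist)).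
  move=> x _; rewrite -!EFinM -EFinD lee_fin.
  set A := `|a x|; set dx := `|q x - p x|.
  have -> : M * dx + (M `^ e)^-1 * (A `^ (1 + e) * dx)
          = (M + A `^ (1 + e) / M `^ e) * dx by ring.
  apply: ler_wpM2r; first exact: normr_ge0.
  exact: ler_cutoff_powR _ _ _ (normr_ge0 (a x)) M0 e0.
rewrite ge0_integralD //; last 4 first.
- by move=> x _; rewrite -EFinM lee_fin mulr_ge0.
- exact: mscale.
- by move=> x _; rewrite -EFinM lee_fin !mulr_ge0 ?powR_ge0.
- exact: mscale _ _ (measurable_funM mpow mdist).
rewrite !ge0_integralZl //; first last.
- by apply/measurable_EFinP; exact: measurable_funM.
- exact/measurable_EFinP.
rewrite leeD2l // mulrC EFinM lee_wpmul2l ?lee_fin //.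
exact: integral_powR_dist_le.
Qed.

Lemma integrable_mul_density : mu.-integrable setT (fun x => (a x * p x)%:E).
Proof.
apply: (@le_ge0_integrable _ (fun x => p x + `|a x| `^ (1 + e) * p x)).
- exact: measurable_funM.
- by apply: measurable_funD => //; exact: measurable_funM.
- move=> x; rewrite normrM (ger0_norm (p0 x)) -[X in X + _]mul1r -mulrDl.
  rewrite ler_wpM2r //.
  by have := ler_cutoff_powR _ _ _ (normr_ge0 (a x)) ltr01 e0; rewrite powR1 divr1.
under eq_integral do rewrite EFinD.
rewrite ge0_integralD //; last 4 first.
- by move=> x _; rewrite lee_fin.
- exact/measurable_EFinP.
- by move=> x _; rewrite lee_fin mulr_ge0 ?powR_ge0.
- by apply/measurable_EFinP; exact: measurable_funM.
by rewrite lte_add_pinfty // (le_lt_trans HBp) ?ltry.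
Qed.

Lemma integrable_mul_perturbed_density :
  (\int[mu]_x (`|q x - p x|)%:E < +oo)%E ->
  mu.-integrable setT (fun x => (a x * q x)%:E).
Proof.
move=> dist_fin.
apply: (@le_ge0_integrable _ (fun x => `|a x| * `|q x - p x| + `|a x| * p x)).
- exact: measurable_funM.
- by apply: measurable_funD; exact: measurable_funM.
- move=> x; rewrite normrM (ger0_norm (q0 x)) -mulrDr ler_wpM2l //.
  by rewrite -lerBlDr ler_norm.
under eq_integral do rewrite EFinD.
rewrite ge0_integralD //; last 3 first.
- by apply/measurable_EFinP; exact: measurable_funM.
- by move=> x _; rewrite lee_fin mulr_ge0.
- by apply/measurable_EFinP; exact: measurable_funM.
apply: lte_add_pinfty.
  apply: le_lt_trans (integral_mul_dist_le _ ltr01) _.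
  by rewrite mul1e lte_add_pinfty ?ltry.
have /integrableP[_] := integrable_mul_density.
by under eq_integral do rewrite abse_EFin normrM (ger0_norm (p0 _)).
Qed.

Lemma abse_integral_mulB_le :
  (`|\int[mu]_x (a x * p x)%:E - \int[mu]_x (a x * q x)%:E|
     <= (1 + (Bq + Bp))%:E * (\int[mu]_x (`|q x - p x|)%:E) `^ (e / (1 + e)))%E.
Proof.
have B0 : 0 <= Bq + Bp.
  rewrite -lee_fin; apply: le_trans integral_powR_dist_le.
  by apply: integral_ge0 => x _; rewrite lee_fin mulr_ge0 ?powR_ge0.
have dist0 : (0 <= \int[mu]_x (`|q x - p x|)%:E)%E.
  by apply: integral_ge0 => x _; rewrite lee_fin.
have [dist_inf|dist_fin] := eqVneq (\int[mu]_x (`|q x - p x|)%:E)%E +oo%E.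
  rewrite dist_inf poweRyr ?gt_eqF ?divr_gt0 ?addr_gt0 // gt0_muley ?leey //.
  by rewrite lte_fin; lra.
have {dist_fin}dist_fin : (\int[mu]_x (`|q x - p x|)%:E < +oo)%E by rewrite ltey.
have [D DE] : exists D, (\int[mu]_x (`|q x - p x|)%:E)%E = D%:E.
  by exists (fine (\int[mu]_x (`|q x - p x|)%:E)%E); rewrite fineK // ge0_fin_numE.
have X0 : (0 <= \int[mu]_x (`|a x| * `|q x - p x|)%:E)%E.
  by apply: integral_ge0 => x _; rewrite lee_fin mulr_ge0.
have [X XE] : exists X, (\int[mu]_x (`|a x| * `|q x - p x|)%:E)%E = X%:E.
  exists (fine (\int[mu]_x (`|a x| * `|q x - p x|)%:E)%E).
  rewrite fineK // ge0_fin_numE //; apply: le_lt_trans (integral_mul_dist_le _ ltr01) _.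
  by rewrite mul1e lte_add_pinfty ?ltry.
rewrite -integralB_EFin //; last 2 first.
- exact: integrable_mul_density.
- exact: integrable_mul_perturbed_density.
apply: le_trans (le_abse_integral _ _ _) _ => //.
  by apply: emeasurable_funB; apply/measurable_EFinP; exact: measurable_funM.
under eq_integral do rewrite -EFinB abse_EFin -mulrBr normrM distrC.
rewrite XE DE poweR_EFin -EFinM lee_fin.
apply: ler_balance_powR => // [|M M0]; first by rewrite -lee_fin -DE.
by rewrite -lee_fin -XE EFinD EFinM -DE integral_mul_dist_le.
Qed.

End integral_density_perturbation.

Section tuple_measurability.
Context {R : realType} {d : nat}.

Definition row_of_tuple (z : d.-tuple R) : 'rV[R]_d := \row_i tnth z i.

Lemma row_of_tupleK : cancel row_of_tuple (@tuple_of_row R d).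
Proof. by move=> z; apply: eq_from_tnth => i; rewrite tnth_mktuple mxE. Qed.

Definition rat_box (ab : d.-tuple rat * d.-tuple rat) : set (d.-tuple R) :=
  [set z | forall i, ratr (tnth ab.1 i) < tnth z i < ratr (tnth ab.2 i)].

Lemma measurable_rat_box ab : measurable (rat_box ab).
Proof.
have -> : rat_box ab = \bigcap_(i in [set: 'I_d])
    (setT `&` (fun z => tnth z i) @^-1` `]ratr (tnth ab.1 i), ratr (tnth ab.2 i)[).
  apply/seteqP; split => [z zab i _|z zab i]; first by split; rewrite //= in_itv zab.
  by have [_] := zab i I; rewrite /= in_itv.
apply: fin_bigcap_measurable; first exact: finite_finset.
by move=> i _; apply: measurable_tnth => //; exact: measurable_itv.
Qed.

Lemma rat_box_near (z : d.-tuple R) (e : R) : 0 < e ->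
  exists ab, rat_box ab z /\
    rat_box ab `<=` [set y | forall i, `|tnth z i - tnth y i| < e].
Proof.
move=> e0.
have near_i i : exists ab : rat * rat,
    tnth z i - e < ratr ab.1 < tnth z i /\ tnth z i < ratr ab.2 < tnth z i + e.
  have [q1] := @rat_in_itvoo R (tnth z i - e) (tnth z i) ltac:(lra).
  have [q2] := @rat_in_itvoo R (tnth z i) (tnth z i + e) ltac:(lra).
  by rewrite !in_itv /= => zq2 zq1; exists (q1, q2); rewrite zq1 zq2.
have [g Hg] := boolp.choice near_i.
exists ([tuple (g i).1 | i < d], [tuple (g i).2 | i < d]); split => [i|y yab i].
  by rewrite /= !tnth_mktuple; have [/andP[_ ->] /andP[-> _]] := Hg i.
have := yab i; rewrite /= !tnth_mktuple => /andP[y1 y2].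
have [/andP[g1 g2] /andP[g3 g4]] := Hg i.
by rewrite ltr_norml; apply/andP; split; lra.
Qed.

Lemma measurable_row_preimage (O : set 'rV[R]_d) : open O ->
  measurable (row_of_tuple @^-1` O).
Proof.
move=> oO; set S := row_of_tuple @^-1` O.
have -> : S = \bigcup_(ab in [set ab | rat_box ab `<=` S]) rat_box ab.
  apply/seteqP; split => [z Sz|z [ab abS /abS //]].
  have /nbhs_ballP[e e0 eO] := oO _ Sz.
  have [ab [abz abe]] := rat_box_near z e e0.
  exists ab => //= y /abe yz; apply: eO; split => // i j.
  by rewrite (ord1 i) /ball /= !mxE.
rewrite bigcup_mkcond; apply: countable_bigcupT_measurable => // ab.
by case: ifPn => // _; exact: measurable_rat_box.
Qed.

Lemma measurable_fun_continuous_row {g : 'rV[R]_d -> R} : continuous g ->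
  measurable_fun setT (g \o row_of_tuple).
Proof.
move=> /continuousP cg; apply: (measurability _ (RGenOpens.measurableE R)).
move=> _ [_ [a [b ->]] <-]; rewrite setTI comp_preimage.
exact: measurable_row_preimage
  (cg _ (@interval_open R (BRight a) (BLeft b) isT isT)).
Qed.

End tuple_measurability.

Lemma continuous_slicel {U V W : topologicalType} {F : U * V -> W} (y : V) :
  continuous F -> continuous (F \o pair^~ y).
Proof.
by move=> cF x; apply: continuous_comp (cF _); apply: cvg_pair => //; exact: cvg_cst.
Qed.

Section kernel_density_estimate.
Context {R : realType} {d : nat} {Omega : Type}.
Variables (K : d.-tuple R -> R) (Z : nat -> Omega -> d.-tuple R) (h : nat -> R).

Lemma measurable_kde n w :
  measurable_fun setT K -> measurable_fun setT (kde K Z h n w).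
Proof.
move=> mK; apply: measurable_funM => //; apply: measurable_sum => i.
apply: measurable_funM => //; apply: measurableT_comp mK _.
apply/measurable_fun_tnthP => j.
rewrite (_ : _ \o _ = fun z => (tnth z j - tnth (Z i w) j) / h n).
  apply: measurable_funM => //; apply: measurable_funB => //.
  exact: measurable_tnth.
by apply: funext => z /=; rewrite tnth_mktuple.
Qed.

Lemma kde_ge0 n w z : (forall x, 0 <= K x) -> 0 <= h n -> 0 <= kde K Z h n w z.
Proof.
move=> K0 hn0; rewrite /kde mulr_ge0 ?invr_ge0 // sumr_ge0 // => i _.
by rewrite mulr_ge0 ?invr_ge0 ?exprn_ge0.
Qed.

End kernel_density_estimate.

Theorem lemma1 (R : realType) (d : nat)
  (leb : {measure set (d.-tuple R) -> \bar R})
  (Hleb : is_lebesgue_measure leb)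
  (p K : d.-tuple R -> R)
  (Hp : is_density leb p) (HK : is_density leb K)
  (HK1int : forall i : 'I_d, leb.-integrable setT (fun x => (tnth x i * K x)%:E))
  (HK1 : forall i : 'I_d, (\int[leb]_x (tnth x i * K x)%:E = 0)%E)
  (HK2int : forall i j : 'I_d,
     leb.-integrable setT (fun x => (tnth x i * tnth x j * K x)%:E))
  (HK2 : forall i j : 'I_d,
     (\int[leb]_x (tnth x i * tnth x j * K x)%:E = (i == j)%:R%:E)%E)
  (dO : measure_display) (Omega : measurableType dO) (P : probability Omega R)
  (Z : nat -> Omega -> d.-tuple R)
  (HZmeas : forall i, measurable_fun setT (Z i))
  (HZlaw : forall i (A : set (d.-tuple R)), measurable A ->
     P (Z i @^-1` A) = (\int[leb]_(x in A) (p x)%:E)%E)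
  (HZind : mutually_independent P Z)
  (h : nat -> R) (Hh : forall n, (0 < n)%N -> 0 < h n)
  (Theta : topologicalType) (f : Theta -> d.-tuple R -> R)
  (Hfpos : forall th z, 0 < f th z)
  (Hfcont : continuous (fun vt : 'rV[R]_d * Theta => f vt.2 (tuple_of_row vt.1)))
  (eps : R) (Heps : 0 < eps)
  (Bp : R)
  (HBp : forall th,
     (\int[leb]_z ((`|ln (f th z)| `^ (1 + eps)) * p z)%:E <= Bp%:E)%E)
  (n0 : nat) (Bq : R)
  (HBq : {ae P, forall w, forall n, (n0 < n)%N -> forall th,
     (\int[leb]_z ((`|ln (f th z)| `^ (1 + eps)) * kde K Z h n w z)%:E
        <= Bq%:E)%E}) :
  exists C : R,
    {ae P, forall w, forall n, (n0 < n)%N -> forall th,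
      (`| neg_loglik leb (f th) (kde K Z h n w) - neg_loglik leb (f th) p |
       <= C%:E * (\int[leb]_z (`| kde K Z h n w z - p z |)%:E)
                   `^ (eps / (1 + eps)))%E}.
Proof.
have [mK [K0 _]] := HK; have [mp [p0 int_p]] := Hp.
exists (1 + (Bq + Bp)); apply: filterS HBq => w HBq_w n n0n th.
have mf : measurable_fun setT (f th).
  move: (measurable_fun_continuous_row (continuous_slicel th Hfcont)).
  by rewrite (_ : _ \o _ = f th) // funeqE => z /=; rewrite row_of_tupleK.
rewrite /neg_loglik oppeK addeC.
apply: abse_integral_mulB_le => //.
- exact: measurableT_comp (@measurable_ln R) mf.
- exact: measurable_kde.
- by move=> z; apply/kde_ge0/ltW/Hh/(leq_ltn_trans _ n0n).
- by rewrite int_p ltry.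
- exact: HBq_w.
Qed.
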